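(* Let $\mathbb{T}=\mathbb{R}/\mathbb{Z}$ with Haar probability measure $\mu$ and inner measure $\mu_*$. There exists a set $B\subset\mathbb{T}$ such that for all positive integers $m,n$, \[\sup_{F\subset B,\ F\text{ compact}}\mu(mF-nF)\neq\mu_*(mB-nB).\]
   Context: $\mu_*(S)=\sup\{\mu(K):K\subset S,\ K\text{ compact}\}$. $mB-nB=\{b_1+\dots+b_m-b_1'-\dots-b_n':b_i,b_j'\in B\}$. *)

From HB Require Import structures.
From mathcomp Require Import all_boot all_order all_algebra.
From mathcomp Require Import all_classical all_reals all_analysis.
Set Implicit Arguments. Unset Strict Implicit. Unset Printing Implicit Defensive.
Import Order.TTheory GRing.Theory Num.Theory.
Import numFieldNormedType.Exports.
Local Open Scope classical_set_scope.
Local Open Scope ring_scope.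

(* The torus T = R/Z, realized as the unit circle in R x R via
   e t = (cos (2 pi t), sin (2 pi t)); e is a topological-group isomorphism
   from R/Z onto the circle (group law: e s * e t = e (s + t)). *)
Definition torus_e {R : realType} (t : R) : R * R :=
  (cos (2 * pi * t), sin (2 * pi * t)).

Definition torus {R : realType} : set (R * R) := range (@torus_e R).

Definition haarT {R : realType} (A : set (R * R)) : \bar R :=
  (@lebesgue_measure R) [set t : R | 0 <= t < 1 /\ A (torus_e t)].

Definition inner_haarT {R : realType} (S : set (R * R)) : \bar R :=
  ereal_sup [set haarT K | K in [set K : set (R * R) | K `<=` S /\ compact K]].

Definition sumdiffT {R : realType} (m n : nat) (A : set (R * R)) : set (R * R) :=
  [set x | exists (a : 'I_m -> R) (c : 'I_n -> R),
     (forall i, A (torus_e (a i))) /\ (forall j, A (torus_e (c j))) /\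
     x = torus_e (\sum_(i < m) a i - \sum_(j < n) c j)].

(* Build B by transfinite recursion along a well-order of the Cantor space
   (of the size of the continuum) whose initial segments are all smaller than
   the continuum.  Stage x adds the angles b_x and b_x + t_x to B, where t_x
   runs over [1/4, 1/3]; as 0 is in B too, mB - nB contains the arc [1/4, 1/3]
   and has inner measure at least 1/12.  Stage x also looks at the x-th closed
   set G_x of angles: if G_x meets a half circle in continuum many points, it
   picks one, e_x, outside the fewer-than-continuum points put in B so far,
   and all later b_y avoid it.  Then B contains no uncountable compact set,
   because a closed uncountable set of reals contains a Cantor set; so for
   compact F in B, mF - nF is countable and null. *)
From HB Require Import structures.
From mathcomp Require Import all_boot all_order all_algebra.
From mathcomp Require Import all_classical all_reals all_analysis.
From mathcomp Require Import wochoice lra.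
From Stdlib Require Import Inverse_Image.
Import Order.TTheory GRing.Theory Num.Theory.
Import numFieldNormedType.Exports.
Local Open Scope classical_set_scope.
Local Open Scope ring_scope.
Set Implicit Arguments. Unset Strict Implicit. Unset Printing Implicit Defensive.

Lemma subset_countable T (A B : set T) : A `<=` B -> countable B -> countable A.
Proof. by move=> AB; apply: sub_countable; exact: subset_card_le. Qed.

Lemma countable_setU T (A B : set T) :
  countable A -> countable B -> countable (A `|` B).
Proof.
move=> cA cB; have -> : A `|` B = \bigcup_(i in [set: bool]) (if i then A else B).
  apply/seteqP; split=> x; first by case=> h; [exists true | exists false].
  by case=> -[] _ h; [left | right].
by apply: bigcup_countable => [|[]]; first exact: countableP.
Qed.

Lemma countable_image T U (f : T -> U) (A : set T) :
  countable A -> countable (f @` A).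
Proof. exact/sub_countable/card_image_le. Qed.

Lemma subsingleton_countable T (A : set T) :
  (forall x y, A x -> A y -> x = y) -> countable A.
Proof.
move=> A1; have [[x Ax]|A0] := pselect (exists x, A x).
  by apply: (subset_countable _ (countable1 x)) => y Ay; exact: A1.
by apply: (subset_countable _ (countable0 T)) => y Ay; apply: A0; exists y.
Qed.

Notation cantor := (nat -> bool).

Definition cantor_le {X : Type} (Z : set X) :=
  exists f : cantor -> X, injective f /\ range f `<=` Z.

Definition cantor_pair (a b : cantor) : cantor :=
  fun n => if odd n then b n./2 else a n./2.

Lemma cantor_pair_inj a b a' b' :
  cantor_pair a b = cantor_pair a' b' -> a = a' /\ b = b'.
Proof.
move=> e; split; apply: funext => n.
  by have := congr1 (fun c => c n.*2) e; rewrite /cantor_pair odd_double doubleK.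
have := congr1 (fun c => c n.*2.+1) e.
by rewrite /cantor_pair /= odd_double /= uphalf_double.
Qed.

Section CantorLe.
Variable X : Type.
Implicit Types Z : set X.

Lemma cantor_le_sub Z Z' : Z `<=` Z' -> cantor_le Z -> cantor_le Z'.
Proof. by move=> ZZ' [f [fi fZ]]; exists f; split=> // x /fZ /ZZ'. Qed.

(* If no slice [b |-> f (a, b)] stays in Z2, choosing for each [a] a [b]
   with [f (a, b)] in Z1 embeds the Cantor space into Z1. *)
Lemma cantor_leU Z1 Z2 : cantor_le (Z1 `|` Z2) -> cantor_le Z1 \/ cantor_le Z2.
Proof.
move=> [f [fi fZ]].
have fZc c : (Z1 `|` Z2) (f c) := fZ _ (imageT f c).
have [[a Ha]|Hn] := pselect (exists a, forall b, Z2 (f (cantor_pair a b))).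
  right; exists (fun b => f (cantor_pair a b)); split; last by move=> _ [b _ <-].
  by move=> b b' /fi /cantor_pair_inj[].
left; have /choice[g Hg] : forall a, exists b, Z1 (f (cantor_pair a b)).
  move=> a; apply: contrapT => Hna; apply: Hn; exists a => b.
  by case: (fZc (cantor_pair a b)) => // h; exfalso; apply: Hna; exists b.
exists (fun a => f (cantor_pair a (g a))); split; last by move=> _ [a _ <-].
by move=> a a' /fi /cantor_pair_inj[].
Qed.

Lemma cantor_le_set1 (p : X) : ~ cantor_le [set p].
Proof.
move=> [f [fi fZ]].
have fp c : f c = p := fZ _ (imageT f c).
have : (fun _ => false) = (fun _ => true) :> cantor by apply: fi; rewrite !fp.
by move/(congr1 (fun c : cantor => c 0%N)).
Qed.

Lemma cantor_le_image (Y : Type) (phi : X -> Y) Z :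
  (forall x y, Z x -> Z y -> phi x = phi y -> x = y) ->
  cantor_le Z -> cantor_le (phi @` Z).
Proof.
move=> phi_inj [f [fi fZ]]; exists (phi \o f); split; last first.
  by move=> _ [c _ <-]; exists (f c) => //; apply: fZ; exists c.
by move=> a b /phi_inj e; apply: fi; apply: e; apply: fZ; [exists a | exists b].
Qed.

Lemma cantor_le_image_inv (Y : Type) (g : X -> Y) Z :
  cantor_le (g @` Z) -> cantor_le Z.
Proof.
move=> [f [fi fZ]].
have /choice[h Hh] : forall c, exists x, Z x /\ g x = f c.
  by move=> c; have [x Zx e] := fZ _ (imageT f c); exists x.
exists h; split; last by move=> _ [c _ <-]; case: (Hh c).
by move=> c c' e; apply: fi; rewrite -(Hh c).2 -(Hh c').2 e.
Qed.

End CantorLe.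

Lemma wf_minimal (T : Type) (lt : T -> T -> Prop) (P : T -> Prop) x :
  well_founded lt -> P x -> exists z, P z /\ forall y, lt y z -> ~ P y.
Proof.
move=> wf; elim: (wf x) => {}x _ IH Px.
have [[y yx Py]|min] := pselect (exists2 y, lt y x & P y); first exact: IH yx Py.
by exists x; split=> // y yx Py; apply: min; exists y.
Qed.

Lemma exists_strict_wellorder (T : eqType) : exists lt : T -> T -> Prop,
  well_founded lt /\ forall x y, lt x y \/ x = y \/ lt y x.
Proof.
have [le le_wo] := well_ordering_principle T.
have le_chain : wo_chain le (mem T) by exact: withinW.
have le_total : total le by move=> x y; apply: (wo_chainW le_chain).
have le_anti : antisymmetric le by move=> x y; apply: (wo_chain_antisymmetric le_chain).
exists (fun x y => le x y /\ x <> y); split.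
  move=> x; apply: contrapT => nacc.
  have ne : nonempty [pred y | `[< ~ Acc (fun x y => le x y /\ x <> y) y >]].
    by exists x; rewrite inE.
  have [z [[+ zmin] _]] := le_wo _ ne; rewrite inE; apply.
  constructor => y [le_yz yz]; apply: contrapT => nacc_y; apply: yz; apply: le_anti.
  by rewrite le_yz zmin // inE.
move=> x y; have [->|xy] := pselect (x = y); first by right; left.
case/orP: (le_total x y) => h; [left | right; right]; split=> // e; exact: xy.
Qed.

(* If some initial segment has the size of the continuum, pull the order back
   along an injection of the Cantor space into the least such segment. *)
Lemma exists_wellorder_small_segments : exists lt : cantor -> cantor -> Prop,
  [/\ well_founded lt, forall x y, lt x y \/ x = y \/ lt y x &
      forall x, ~ cantor_le [set y | lt y x]].
Proof.
have [lt [wf tri]] := exists_strict_wellorder cantor.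
have [[x1 big]|small] := pselect (exists x, cantor_le [set y | lt y x]); last first.
  by exists lt; split=> // x bx; apply: small; exists x.
have [x0 [[iota [iota_inj iota_seg]] x0min]] :=
  wf_minimal (P := fun x => cantor_le [set y | lt y x]) wf big.
exists (fun a b => lt (iota a) (iota b)); split.
- exact: wf_inverse_image.
- move=> a b; case: (tri (iota a) (iota b)) => [|[/iota_inj|]]; tauto.
- move=> a ba; apply: (x0min (iota a)); first by apply: iota_seg; exists a.
  apply: cantor_le_sub (cantor_le_image (phi := iota) _ ba); first by move=> _ [y ? <-].
  by move=> y y' _ _ /iota_inj.
Qed.

Section CantorScheme.
Variables (R : realType) (Q : set R) (q0 : R).

(* A ball [(q, r)] with [q] in [Q] splits into the disjoint closed balls
   [(q', d/3)] and [(q, d/3)], where [q'] is a point of [Q] at distance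
   [d < r/2] from [q]; the branches of this tree shrink to distinct points of
   the closure of [Q]. *)
Definition near_point (q e : R) : R :=
  get [set q' | Q q' /\ q' != q /\ `|q - q'| < e].

Definition split_ball (s : R * R) (b : bool) : R * R :=
  let q' := near_point s.1 (s.2 / 2) in let d := `|s.1 - q'| in
  if b then (q', d / 3) else (s.1, d / 3).

Fixpoint scheme_ball (c : cantor) (n : nat) : R * R :=
  if n is n'.+1 then split_ball (scheme_ball c n') (c n') else (q0, 1).

Definition scheme_low (c : cantor) (n : nat) : R :=
  (scheme_ball c n).1 - (scheme_ball c n).2.

Definition scheme_point (c : cantor) : R := sup (range (scheme_low c)).

Hypothesis Qq0 : Q q0.
Hypothesis Q_without_isolated : forall q, Q q -> forall e, 0 < e ->
  exists q', Q q' /\ q' != q /\ `|q - q'| < e.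

Lemma near_pointP s : Q s.1 -> 0 < s.2 ->
  let q' := near_point s.1 (s.2 / 2) in Q q' /\ q' != s.1 /\ `|s.1 - q'| < s.2 / 2.
Proof.
move=> Qs s2_gt0; have r_gt0 : 0 < s.2 / 2 by rewrite divr_gt0.
exact: (xgetPex point (Q_without_isolated Qs r_gt0)).
Qed.

Lemma split_ballP s b : Q s.1 -> 0 < s.2 ->
  [/\ Q (split_ball s b).1, 0 < (split_ball s b).2,
      (split_ball s b).2 <= s.2 / 2 &
      forall x, `|x - (split_ball s b).1| <= (split_ball s b).2 ->
        `|x - s.1| <= s.2].
Proof.
move=> Qs s2_gt0; have [Qq' [q'_neq q'_near]] := near_pointP Qs s2_gt0.
rewrite /split_ball; set q' := near_point _ _ in Qq' q'_neq q'_near *.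
have d_gt0 : 0 < `|s.1 - q'| by rewrite normr_gt0 subr_eq0 eq_sym.
case: b => /=; split=> //; rewrite ?divr_gt0 //; try lra.
- move=> x hx; have := ler_distD q' x s.1.
  by rewrite [`|q' - s.1|]distrC; lra.
- by move=> x hx; lra.
Qed.

Lemma scheme_ballP c n : Q (scheme_ball c n).1 /\ 0 < (scheme_ball c n).2.
Proof.
elim: n => [|n [Qs s_gt0]] /=; first by split=> //; lra.
by have [] := split_ballP (c n) Qs s_gt0.
Qed.

Lemma scheme_ball_radius c n : (scheme_ball c n).2 <= n.+1%:R^-1.
Proof.
elim: n => [|n IH] /=; first by rewrite invr1.
have [Qs s_gt0] := scheme_ballP c n.
have [_ _ r_half _] := split_ballP (c n) Qs s_gt0.
apply: (le_trans r_half); apply: le_trans (ler_wpM2r _ IH) _ => //.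
by rewrite -invfM lef_pV2 ?posrE // -natrM ler_nat muln2 doubleS !ltnS -addnn leq_addr.
Qed.

Lemma scheme_ball_nested c m n : (m <= n)%N -> forall x,
  `|x - (scheme_ball c n).1| <= (scheme_ball c n).2 ->
  `|x - (scheme_ball c m).1| <= (scheme_ball c m).2.
Proof.
elim: n => [|n IH]; first by rewrite leqn0 => /eqP ->.
rewrite leq_eqVlt => /orP[/eqP -> //|]; rewrite ltnS => mn x hx.
apply: (IH mn); have [Qs s_gt0] := scheme_ballP c n.
by have [_ _ _] := split_ballP (c n) Qs s_gt0; apply.
Qed.

Lemma scheme_low_ball c n :
  `|scheme_low c n - (scheme_ball c n).1| <= (scheme_ball c n).2.
Proof.
have [_ s_gt0] := scheme_ballP c n.
by rewrite /scheme_low addrAC subrr add0r normrN gtr0_norm.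
Qed.

Lemma scheme_low_le c n k : scheme_low c n <= (scheme_ball c k).1 + (scheme_ball c k).2.
Proof.
have := scheme_ball_nested (leq_maxl n k) (scheme_low_ball c (maxn n k)).
have := scheme_ball_nested (leq_maxr n k) (scheme_low_ball c (maxn n k)).
by rewrite !ler_norml /scheme_low; lra.
Qed.

Lemma scheme_point_ball c n :
  `|scheme_point c - (scheme_ball c n).1| <= (scheme_ball c n).2.
Proof.
have ub : has_ubound (range (scheme_low c)).
  by exists ((scheme_ball c 0).1 + (scheme_ball c 0).2) => _ [k _ <-]; exact: scheme_low_le.
have lo_le : scheme_low c n <= scheme_point c by apply: ub_le_sup => //; exists n.
have le_hi : scheme_point c <= (scheme_ball c n).1 + (scheme_ball c n).2.
  apply: ge_sup; first by exists (scheme_low c 0), 0%N.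
  by move=> _ [k _ <-]; exact: scheme_low_le.
by move: lo_le le_hi; rewrite ler_norml /scheme_low; lra.
Qed.

Lemma scheme_point_closure (G : set R) c : closed G -> Q `<=` G -> G (scheme_point c).
Proof.
move=> cG QG; apply: cG => B /nbhs_ballP[e /= e_gt0 eB].
have [n ne] : exists n : nat, n.+1%:R^-1 < e.
  exists (Num.trunc e^-1); rewrite -ltf_pV2 ?posrE ?invr_gt0 ?ltr0n //.
  by rewrite invrK truncnS_gt.
exists (scheme_ball c n).1; split; first by apply: QG; have [] := scheme_ballP c n.
apply: eB; rewrite /ball /=; apply: le_lt_trans (scheme_point_ball c n) _.
exact: le_lt_trans (scheme_ball_radius c n) ne.
Qed.

Lemma scheme_point_inj : injective scheme_point.
Proof.
move=> c c' e; apply: contrapT => cc'.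
have ex_diff : exists k, c k != c' k.
  apply: contrapT => h; apply: cc'; apply: funext => k.
  by apply/eqP; apply: contrapT => h'; apply: h; exists k; apply/negP.
case: (ex_minnP ex_diff) => k ck kmin.
have same i : (i <= k)%N -> scheme_ball c i = scheme_ball c' i.
  elim: i => [|i IH] ik //=; rewrite IH ?(ltnW ik) //; congr split_ball.
  by apply/eqP; apply: contraTT ik; rewrite -ltnNge ltnS; apply: kmin.
have [Qs s_gt0] := scheme_ballP c k.
have [Qq' [q'_neq q'_near]] := near_pointP Qs s_gt0.
have := scheme_point_ball c k.+1; have := scheme_point_ball c' k.+1.
rewrite /= -(same k (leqnn k)) e /split_ball; move: ck.
set q := (scheme_ball c k).1 in Qq' q'_neq q'_near *.
set q' := near_point q _ in Qq' q'_neq q'_near *.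
have d_gt0 : 0 < `|q - q'| by rewrite normr_gt0 subr_eq0 eq_sym.
have := ler_distD (scheme_point c') q q'.
by case: (c k); case: (c' k) => //=; rewrite (distrC q (scheme_point c')); lra.
Qed.

Lemma perfect_closure_cantor_le (G : set R) : closed G -> Q `<=` G -> cantor_le G.
Proof.
move=> cG QG; exists scheme_point; split; first exact: scheme_point_inj.
by move=> _ [c _ <-]; exact: scheme_point_closure.
Qed.

End CantorScheme.

Section PerfectSet.
Variable R : realType.

(* Cantor-Bendixson: the points of [G] with no countable neighbourhood in [G]
   have no isolated points, and all but countably many points of [G] (those
   covered by rational intervals meeting [G] countably) are of this kind. *)
Lemma closed_uncountable_cantor_le (G : set R) : closed G -> ~ countable G -> cantor_le G.
Proof.
move=> cG ncG.
pose Q := [set x | G x /\ forall e, 0 < e -> ~ countable (G `&` [set y | `|x - y| < e])].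
have cGQ : countable (G `\` Q).
  pose D := [set ab : rat * rat | countable (G `&` [set y | ratr ab.1 < y < ratr ab.2])].
  apply: (@subset_countable _ _
    (\bigcup_(ab in D) (G `&` [set y | ratr ab.1 < y < ratr ab.2]))); last first.
    by apply: bigcup_countable => //; exact: countableP.
  move=> x [Gx nQx].
  have [e e_gt0 ce] : exists2 e, 0 < e & countable (G `&` [set y | `|x - y| < e]).
    apply: contrapT => h; apply: nQx; split=> // e e_gt0 ce; apply: h; by exists e.
  have [a] := @rat_in_itvoo R (x - e) x ltac:(by rewrite ltrBlDr ltrDl).
  have [b] := @rat_in_itvoo R x (x + e) ltac:(by rewrite ltrDl).
  rewrite !in_itv /= => /andP[b1 b2] /andP[a1 a2].
  exists (a, b) => /=; last by split=> //; apply/andP.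
  apply: subset_countable ce => y [Gy /andP[y1 y2]].
  by split=> //=; rewrite ltr_norml; apply/andP; split; lra.
have [q0 Qq0] : Q !=set0.
  apply: contrapT => Q0; apply: ncG; apply: subset_countable cGQ => x Gx.
  by split=> // Qx; apply: Q0; exists x.
apply: (perfect_closure_cantor_le (Q := Q) (q0 := q0)) => //; last by move=> x [].
move=> q [Gq Qq] e e_gt0; apply: contrapT => h; apply: (Qq e e_gt0).
apply: (@subset_countable _ _ ((G `\` Q) `|` [set q])); last first.
  by apply: countable_setU => //; exact: countable1.
move=> y [Gy qy]; have [->|yq] := pselect (y = q); first by right.
by left; split=> // Qy; apply: h; exists y; split=> //; split=> //; apply/eqP.
Qed.

Lemma itv_cantor_le (a b : R) : a < b -> cantor_le [set x | a <= x <= b].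
Proof.
move=> ab; have cl : closed [set x : R | a <= x <= b].
  by have := @itv_closed _ R a b; congr closed; apply/seteqP; split=> x; rewrite /= in_itv.
apply: (perfect_closure_cantor_le (Q := [set x | a < x < b]) (q0 := (a + b) / 2)) => //.
- by apply/andP; split; lra.
- move=> q /andP[q1 q2] e e_gt0; exists (q + Num.min e (b - q) / 2).
  have m1 : 0 < Num.min e (b - q) by rewrite lt_min e_gt0 subr_gt0.
  have m2 : Num.min e (b - q) <= e by rewrite ge_min lexx.
  have m3 : Num.min e (b - q) <= b - q by rewrite ge_min lexx orbT.
  split; first by apply/andP; split; lra.
  split; first by apply/negP => /eqP h; lra.
  by rewrite opprD addrA subrr add0r normrN gtr0_norm; lra.
- by move=> x /andP[x1 x2]; apply/andP; split; lra.
Qed.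

End PerfectSet.

Section Coding.
Variable R : realType.

Definition rat_cut (x : R) : cantor :=
  fun n => ratr (odflt 0 (@unpickle rat n)) < x.

Lemma rat_cut_inj : injective rat_cut.
Proof.
suff cut_neq x y : y < x -> rat_cut x <> rat_cut y.
  by move=> x y e; case: (ltgtP x y) => // /cut_neq; [move/(_ (esym e)) | move/(_ e)].
move=> yx e; have [q] := rat_in_itvoo yx; rewrite in_itv /= => /andP[qy qx].
have := congr1 (fun f => f (pickle q)) e; rewrite /rat_cut pickleK /=.
by rewrite qx ltNge (ltW qy).
Qed.

Definition rat_itv (n : nat) : set R :=
  let ab := odflt (0, 0) (@unpickle (rat * rat)%type n) in
  [set y | ratr ab.1 < y < ratr ab.2].

Definition closed_code (G : set R) : cantor := fun n => `[< G `&` rat_itv n = set0 >].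

Lemma closed_code_neq (G G' : set R) x : closed G' -> G x -> ~ G' x ->
  closed_code G <> closed_code G'.
Proof.
move=> cG' Gx nG'x e.
have /existsNP[B /not_implyP[/nbhs_ballP[r /= r_gt0 rB] G'B]] : ~ closure G' x.
  by move=> /cG'.
have [a] := @rat_in_itvoo R (x - r) x ltac:(by rewrite ltrBlDr ltrDl).
have [b] := @rat_in_itvoo R x (x + r) ltac:(by rewrite ltrDl).
rewrite !in_itv /= => /andP[b1 b2] /andP[a1 a2].
have G'0 : G' `&` rat_itv (pickle (a, b)) = set0.
  rewrite /rat_itv pickleK /=; apply/seteqP; split=> // y [G'y /andP[y1 y2]].
  apply: G'B; exists y; split=> //; apply: rB.
  by rewrite /ball /= ltr_norml; apply/andP; split; lra.
have := congr1 (fun f => f (pickle (a, b))) e.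
rewrite /closed_code G'0 (asboolT (erefl (@set0 R))) => /asboolP G0.
rewrite /rat_itv pickleK /= in G0.
have : (G `&` [set y | ratr a < y < ratr b]) x by split=> //; apply/andP.
by rewrite G0.
Qed.

Lemma closed_code_inj (G G' : set R) : closed G -> closed G' ->
  closed_code G = closed_code G' -> G = G'.
Proof.
move=> cG cG' e; apply/seteqP; split=> x Gx; apply: contrapT => nGx.
  exact: closed_code_neq cG' Gx nGx e.
exact: closed_code_neq cG Gx nGx (esym e).
Qed.

(* Codes of nothing decode to the junk values [1/4] and [set0]. *)
Definition target (x : cantor) : R :=
  let t := get [set t : R | 1/4 <= t <= 1/3 /\ rat_cut t = x] in
  if 1/4 <= t <= 1/3 then t else 1/4.

Definition task (x : cantor) : set R :=
  [set s | exists G, [/\ closed G, closed_code G = x & G s]].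

Lemma target_itv x : 1/4 <= target x <= 1/3.
Proof. by rewrite /target; case: ifP => // _; apply/andP; split; lra. Qed.

Lemma target_surj t : 1/4 <= t <= 1/3 -> exists x, target x = t.
Proof.
move=> t_itv; exists (rat_cut t); rewrite /target.
have [v_itv /rat_cut_inj ->] := @xgetPex R point
  [set v : R | 1/4 <= v <= 1/3 /\ rat_cut v = rat_cut t] (ex_intro _ t (conj t_itv erefl)).
by rewrite t_itv.
Qed.

Lemma task_surj (G : set R) : closed G -> exists x, task x = G.
Proof.
move=> cG; exists (closed_code G); apply/seteqP; split=> s; last by exists G.
by move=> [G' [cG' /closed_code_inj e G's]]; rewrite -(e cG').
Qed.

End Coding.

Section Torus.
Variable R : realType.
Local Notation te := (@torus_e R).

Lemma torus_e_add_congr (u u' v v' : R) :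
  te u = te u' -> te v = te v' -> te (u + v) = te (u' + v').
Proof. by rewrite /torus_e !mulrDr !cosD !sinD => -[-> ->] [-> ->]. Qed.

Lemma torus_e_opp_congr (u u' : R) : te u = te u' -> te (- u) = te (- u').
Proof. by rewrite /torus_e !mulrN !cosN !sinN => -[-> ->]. Qed.

Lemma torus_e_sum_congr k (a a' : 'I_k -> R) : (forall i, te (a i) = te (a' i)) ->
  te (\sum_(i < k) a i) = te (\sum_(i < k) a' i).
Proof.
by move=> aa'; apply: (big_ind2 (fun u v => te u = te v)) => // *;
  exact: torus_e_add_congr.
Qed.

Lemma torus_e1 : te 1 = te 0.
Proof.
have two_pi : 2 * pi = pi *+ 2 :> R by rewrite mulr2n mulrDl mul1r.
by rewrite /torus_e !mulr0 !mulr1 two_pi cos2pi sin2pi cos0 sin0.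
Qed.

Lemma torus_e_addn (a : R) (n : nat) : te (a + n%:R) = te a.
Proof.
elim: n => [|n IH]; first by rewrite addr0.
by rewrite -addn1 natrD addrA (torus_e_add_congr IH torus_e1) addr0.
Qed.

Lemma torus_e_addz (a : R) (k : int) : te (a + k%:~R) = te a.
Proof.
case: k => n; first exact: torus_e_addn.
by rewrite NegzE mulrNz -{2}(subrK n.+1%:R a) torus_e_addn.
Qed.

Lemma torus_e_reduce (a : R) : exists2 s, -(1/2) <= s <= 1/2 & te a = te s.
Proof.
exists (a - (Num.floor (a + 1/2))%:~R); last by rewrite -intrN torus_e_addz.
have /andP[h1 h2] := floor_itv (a + 1/2); rewrite intrD in h2.
by apply/andP; split; lra.
Qed.

Lemma torus_e_inj_itv (a s s' : R) : a <= s <= a + 1/2 -> a <= s' <= a + 1/2 ->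
  te s = te s' -> s = s'.
Proof.
move=> s_itv s'_itv /(@torus_e_add_congr _ _ (- a) (- a)) /(_ erefl) /(congr1 fst) /= e.
apply: (addIr (- a)).
have angle_itv u : a <= u <= a + 1/2 -> 2 * pi * (u - a) \in `[0, pi].
  move=> /andP[u1 u2]; rewrite in_itv /= mulr_ge0 ?subr_ge0 ?mulr_ge0 ?pi_ge0 //=.
  by rewrite mulrAC -[leRHS]mul1r ler_pM2r ?pi_gt0 //; lra.
have := cos_inj (angle_itv _ s_itv) (angle_itv _ s'_itv) e.
by move/mulfI; apply; rewrite mulf_neq0 // gt_eqF ?pi_gt0.
Qed.

Lemma torus_e_continuous : continuous te.
Proof.
move=> x; apply: (@cvg_pair _ _ _ _ (nbhs (cos (2 * pi * x))) (nbhs (sin (2 * pi * x)))).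
- apply: (continuous_comp (f := fun t => 2 * pi * t) (g := cos)).
    exact: mulrl_continuous.
  exact: continuous_cos.
- apply: (continuous_comp (f := fun t => 2 * pi * t) (g := sin)).
    exact: mulrl_continuous.
  exact: continuous_sin.
Qed.

Lemma haarT_countable (P : set (R * R)) (W : set R) :
  countable W -> P `<=` te @` W -> haarT P = 0%E.
Proof.
move=> cW PW; rewrite /haarT; apply: countable_lebesgue_measure0.
pose fiber (a : R) (w : R) := [set t | a <= t <= a + 1/2 /\ te t = te w].
have fiber1 a w : countable (fiber a w).
  apply: subsingleton_countable => x y [x_itv xw] [y_itv yw].
  by apply: torus_e_inj_itv x_itv y_itv _; rewrite xw yw.
apply: (@subset_countable _ _ (\bigcup_(w in W) (fiber 0 w `|` fiber (1/2) w))).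
  move=> t /= [/andP[t0 t1] /PW[w Ww ew]]; exists w => //.
  by case: (leP t (1/2)) => ht; [left | right]; split=> //; apply/andP; split; lra.
by apply: bigcup_countable => // w _; apply: countable_setU.
Qed.

Definition sum_set (W : set R) (k : nat) : set R :=
  [set \sum_(i < k) g i | g in [set g : 'I_k -> R | forall i, W (g i)]].

Lemma sum_set_countable W k : countable W -> countable (sum_set W k).
Proof.
move=> cW; elim: k => [|k IH].
  by apply: (subset_countable _ (countable1 0)) => _ [g _ <-]; rewrite big_ord0.
apply: (@subset_countable _ _ ((fun p : R * R => p.1 + p.2) @` (sum_set W k `*` W))).
  move=> _ [g Wg <-]; rewrite big_ord_recr /=.
  exists (\sum_(i < k) g (widen_ord (leqnSn k) i), g ord_max) => //.
  by split=> //=; exists (fun i => g (widen_ord (leqnSn k) i)).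
by apply: countable_image; apply: countableX.
Qed.

Lemma sumdiffT_countable (F : set (R * R)) (W : set R) m n :
  countable W -> F `<=` te @` W ->
  exists2 W', countable W' & sumdiffT m n F `<=` te @` W'.
Proof.
move=> cW FW.
exists ((fun p : R * R => p.1 - p.2) @` (sum_set W m `*` sum_set W n)).
  by apply: countable_image; apply: countableX; apply: sum_set_countable.
move=> _ [a [c [Fa [Fc ->]]]].
have /choice[wa Hwa] : forall i, exists w, W w /\ te w = te (a i).
  by move=> i; have [w ? ?] := FW _ (Fa i); exists w.
have /choice[wc Hwc] : forall j, exists w, W w /\ te w = te (c j).
  by move=> j; have [w ? ?] := FW _ (Fc j); exists w.
exists (\sum_(i < m) wa i - \sum_(j < n) wc j).
  exists (\sum_(i < m) wa i, \sum_(j < n) wc j) => //.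
  by split; [exists wa => // i; case: (Hwa i) | exists wc => // j; case: (Hwc j)].
apply: torus_e_add_congr; first by apply: torus_e_sum_congr => i; case: (Hwa i).
by apply/torus_e_opp_congr/torus_e_sum_congr => j; case: (Hwc j).
Qed.

Lemma compact_arc (a b : R) : compact (te @` `[a, b]).
Proof.
apply: continuous_compact; last exact: segment_compact.
by apply: continuous_subspaceT => x; exact: torus_e_continuous.
Qed.

Lemma haarT_arc (a b : R) : 0 <= a -> a < b -> b < 1 ->
  ((b - a)%:E <= haarT (te @` `[a, b]))%E.
Proof.
move=> a_ge0 ab b_lt1.
have cl_arc : closed (te @^-1` (te @` `[a, b])).
  apply: closed_comp; first by move=> x _; exact: torus_e_continuous.
  by apply: compact_closed; [exact: norm_hausdorff | exact: compact_arc].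
rewrite -[X in (X <= _)%E](_ : lebesgue_measure `[a, b] = _); last first.
  by rewrite lebesgue_measure_itv /= lte_fin ab -EFinD.
rewrite /haarT; apply: le_measure.
- by rewrite inE; exact: measurable_itv.
- rewrite inE; have -> : [set t | 0 <= t < 1 /\ (te @` `[a, b]) (te t)] =
      `[0, 1[%classic `&` (te @^-1` (te @` `[a, b])).
    by apply/seteqP; split=> t; rewrite /= in_itv.
  apply: measurableI; first exact: measurable_itv.
  exact: measurable_realfun.closed_measurable.
- move=> t t_ab; split; last by exists t.
  by move: t_ab; rewrite /= in_itv /= => /andP[t1 t2]; apply/andP; split; lra.
Qed.

End Torus.

Section WellFoundedRecursion.
Variables (T V : Type) (lt : T -> T -> Prop) (wf : well_founded lt) (v0 : V).
Variable step : T -> (T -> V) -> V.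
Hypothesis step_ext : forall x h h', (forall y, lt y x -> h y = h' y) ->
  step x h = step x h'.

(* [v0] is a dummy value for non-predecessors, which [step] never inspects. *)
Definition wf_rec : T -> V :=
  Fix wf (fun _ => V) (fun x (h : forall y, lt y x -> V) =>
    step x (fun y => if pselect (lt y x) is left p then h y p else v0)).

Lemma wf_recE x : wf_rec x = step x wf_rec.
Proof.
rewrite /wf_rec Fix_eq; last first.
  move=> z f g fg; congr step; apply: funext => y.
  by case: (pselect (lt y z)) => // p; rewrite fg.
by apply: step_ext => y yx; case: (pselect (lt y x)).
Qed.

End WellFoundedRecursion.

Section Construction.
Variable R : realType.
Local Notation te := (@torus_e R).
Local Notation target := (@target R).
Local Notation task := (@task R).
Variables (lt : cantor -> cantor -> Prop) (wf : well_founded lt).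
Hypothesis lt_total : forall x y, lt x y \/ x = y \/ lt y x.
Hypothesis small_segment : forall x, ~ cantor_le [set y | lt y x].

Definition half_arc (a : R) : set R := [set s | a <= s <= a + 1/2].

Definition large_task (x : cantor) : Prop :=
  exists2 a, a = 0 \/ a = -(1/2) & cantor_le (task x `&` half_arc a).

Definition B_before (h : cantor -> R * R) x : set (R * R) :=
  [set te (h y).2 | y in [set y | lt y x]] `|`
  [set te ((h y).2 + target y) | y in [set y | lt y x]].

Definition E_before (h : cantor -> R * R) x : set (R * R) :=
  [set te (h y).1 | y in [set y | lt y x /\ large_task y]].

Definition choose_excluded x (B : set (R * R)) : R :=
  get [set s | task x s /\ ~ (B `|` [set te 0]) (te s)].

Definition choose_base x (E : set (R * R)) : R :=
  get [set b | 0 <= b <= 1/6 /\ ~ E (te b) /\ ~ E (te (b + target x))].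

Definition construction_step x (h : cantor -> R * R) : R * R :=
  let e := choose_excluded x (B_before h x) in
  (e, choose_base x (E_before h x `|` [set p | large_task x /\ p = te e])).

Lemma construction_step_ext x h h' : (forall y, lt y x -> h y = h' y) ->
  construction_step x h = construction_step x h'.
Proof.
move=> hh'; rewrite /construction_step.
have -> : B_before h x = B_before h' x.
  by rewrite /B_before; congr (_ `|` _); apply: eq_imagel => y yx; rewrite hh'.
have -> // : E_before h x = E_before h' x.
by apply: eq_imagel => y [yx _]; rewrite hh'.
Qed.

Definition construction : cantor -> R * R := wf_rec wf (0, 0) construction_step.

Definition excl x := (construction x).1.
Definition base x := (construction x).2.
Definition E_upto x := E_before construction x `|` [set p | large_task x /\ p = te (excl x)].

Definition Bset : set (R * R) :=
  [set te 0] `|` range (fun z => te (base z)) `|` range (fun z => te (base z + target z)).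

Lemma exclE x : excl x = choose_excluded x (B_before construction x).
Proof. by rewrite /excl /construction wf_recE //; exact: construction_step_ext. Qed.

Lemma baseE x : base x = choose_base x (E_upto x).
Proof. by rewrite /base /E_upto /excl /construction wf_recE //; exact: construction_step_ext. Qed.

Lemma B_before_small x : ~ cantor_le (B_before construction x `|` [set te 0]).
Proof.
move=> /cantor_leU[/cantor_leU[]|]; last exact: cantor_le_set1.
  by move=> /cantor_le_image_inv /small_segment.
by move=> /cantor_le_image_inv /small_segment.
Qed.

Lemma E_upto_small x : ~ cantor_le (E_upto x).
Proof.
have large_sub : [set y | lt y x /\ large_task y] `<=` [set y | lt y x] by move=> y [].
move=> /cantor_leU[|/(cantor_le_sub (Z' := [set te (excl x)]))].
  by move=> /cantor_le_image_inv /(cantor_le_sub large_sub) /small_segment.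
by move=> excl1; apply: cantor_le_set1 (excl1 _) => p [_ ->].
Qed.

Lemma excl_spec x : large_task x ->
  task x (excl x) /\ ~ (B_before construction x `|` [set te 0]) (te (excl x)).
Proof.
move=> [a a_half large]; rewrite exclE.
suff: exists s, task x s /\ ~ (B_before construction x `|` [set te 0]) (te s).
  exact: xgetPex.
apply: contrapT => none; apply: (@B_before_small x).
apply: cantor_le_sub (cantor_le_image (phi := te) _ large).
  move=> _ [s [task_s _] <-]; apply: contrapT => Bs; apply: none.
  by exists s.
by move=> s s' [_ s_itv] [_ s'_itv]; exact: torus_e_inj_itv s_itv s'_itv.
Qed.

Lemma base_spec x : [/\ 0 <= base x <= 1/6, ~ E_upto x (te (base x)) &
  ~ E_upto x (te (base x + target x))].
Proof.
rewrite baseE.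
suff: exists b, 0 <= b <= 1/6 /\ ~ E_upto x (te b) /\ ~ E_upto x (te (b + target x)).
  by move=> /(xgetPex point)[? []].
apply: contrapT => none; apply: (@E_upto_small x).
have /andP[t1 t2] := @target_itv R x.
have : cantor_le ([set b | 0 <= b <= 1/6 /\ E_upto x (te b)] `|`
                  [set b | 0 <= b <= 1/6 /\ E_upto x (te (b + target x))]).
  apply: cantor_le_sub (@itv_cantor_le R 0 (1/6) ltac:(lra)) => b b_itv.
  apply: contrapT => nb; apply: none; exists b.
  by split=> //; split=> Eb; apply: nb; [left | right].
move=> /cantor_leU[] large.
- apply: cantor_le_sub (cantor_le_image (phi := te) _ large); first by move=> _ [b [_ ?] <-].
  move=> s s' [/andP[s1 s2] _] [/andP[s'1 s'2] _].
  by apply: (@torus_e_inj_itv _ 0); apply/andP; split; lra.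
- apply: cantor_le_sub (cantor_le_image (phi := fun b => te (b + target x)) _ large).
    by move=> _ [b [_ ?] <-].
  move=> s s' [/andP[s1 s2] _] [/andP[s'1 s'2] _] /(@torus_e_inj_itv _ 0) e.
  by apply: (addIr (target x)); apply: e; apply/andP; split; lra.
Qed.

Lemma excl_notin_B y : large_task y -> ~ Bset (te (excl y)).
Proof.
move=> large; have [_ notB] := excl_spec large.
have E_later z : ~ lt z y -> E_upto z (te (excl y)).
  by case: (lt_total z y) => [//|[->|yz] _]; [right | left; exists y].
move=> [[excl0|[z _ ez]]|[z _ ez]]; first by apply: notB; right.
- have [zy|/E_later] := pselect (lt z y); first by apply: notB; left; left; exists z.
  by have [_ + _] := base_spec z; rewrite ez.
- have [zy|/E_later] := pselect (lt z y); first by apply: notB; left; right; exists z.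
  by have [_ _] := base_spec z; rewrite ez.
Qed.

Lemma Bset_sub_torus : Bset `<=` torus.
Proof. by move=> p [[->|[z _ <-]]|[z _ <-]]; eexists. Qed.

(* A closed uncountable slice of [F] would be the task of some stage, whose
   excluded point then lies in [F] but not in [B]. *)
Lemma slice_countable (F : set (R * R)) a : F `<=` Bset -> closed F ->
  a = 0 \/ a = -(1/2) -> countable [set s | half_arc a s /\ F (te s)].
Proof.
move=> FB cF a_half; apply: contrapT => uncountable.
set G := [set s | _ /\ _] in uncountable *.
have cG : closed G.
  have -> : G = `[a, a + 1/2]%classic `&` (te @^-1` F).
    by apply/seteqP; split=> s; rewrite /= in_itv.
  apply: closedI; first exact: itv_closed.
  by apply: closed_comp cF => x _; exact: torus_e_continuous.
have [x task_x] := task_surj cG.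
have large : large_task x.
  exists a => //; rewrite task_x.
  by apply: cantor_le_sub (closed_uncountable_cantor_le cG uncountable) => s [].
have [+ _] := excl_spec large; rewrite task_x => -[_ F_excl].
exact: excl_notin_B large (FB _ F_excl).
Qed.

Lemma haarT_sumdiffT_compact (F : set (R * R)) m n : F `<=` Bset -> compact F ->
  haarT (sumdiffT m n F) = 0%E.
Proof.
move=> FB cpF.
have cF : closed F by apply: compact_closed; [exact: norm_hausdorff | exact: cpF].
pose W := [set s | half_arc 0 s /\ F (te s)] `|` [set s | half_arc (-(1/2)) s /\ F (te s)].
have cW : countable W by apply: countable_setU; apply: slice_countable => //; tauto.
have FW : F `<=` te @` W.
  move=> p Fp; have [a _ ea] := Bset_sub_torus (FB p Fp).
  have [s /andP[s1 s2] es] := torus_e_reduce a; exists s; last by rewrite -es.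
  by case: (leP 0 s) => hs; [left | right]; (split; [apply/andP; split; lra | rewrite -es ea]).
have [W' cW' sW'] := sumdiffT_countable m n cW FW.
exact: haarT_countable cW' sW'.
Qed.

Lemma arc_sub_sumdiffT m n : (0 < m)%N -> (0 < n)%N ->
  te @` `[1/4, 1/3] `<=` sumdiffT m n Bset.
Proof.
move=> m_gt0 n_gt0 _ [t t_itv <-].
have [x <-] : exists x, target x = t by apply: target_surj; move: t_itv; rewrite /= in_itv.
pose first k (v : R) (i : 'I_k) := if val i == 0%N then v else 0.
have sum_first k v : (0 < k)%N -> \sum_(i < k) first k v i = v.
  by case: k => // k _; rewrite big_ord_recl /= big1 ?addr0.
exists (first m (base x + target x)), (first n (base x)); split; last split.
- by move=> i; rewrite /first; case: ifP => _; [right; exists x | left; left].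
- by move=> j; rewrite /first; case: ifP => _; [left; right; exists x | left; left].
- by rewrite !sum_first // addrAC subrr add0r.
Qed.

End Construction.

Unset Implicit Arguments.

Theorem proposition5p4 (R : realType) :
  exists B : set (R * R), B `<=` torus /\
    forall m n : nat, (0 < m)%N -> (0 < n)%N ->
      ereal_sup [set haarT (sumdiffT m n F) |
                 F in [set F : set (R * R) | F `<=` B /\ compact F]]
      <> inner_haarT (sumdiffT m n B).
Proof.
have [lt [wf lt_total small]] := exists_wellorder_small_segments.
exists (Bset (R := R) wf); split; first exact: Bset_sub_torus.
move=> m n m_gt0 n_gt0 sup_eq.
have sup_le0 : (ereal_sup [set haarT (sumdiffT m n F) |
    F in [set F | F `<=` Bset (R := R) wf /\ compact F]] <= 0)%E.
  apply: ge_ereal_sup => _ [F [FB cF] <-].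
  by rewrite (haarT_sumdiffT_compact lt_total small).
have inner_ge : ((1/3 - 1/4 : R)%:E <= inner_haarT (sumdiffT m n (Bset (R := R) wf)))%E.
  apply: le_trans (@haarT_arc R (1/4) (1/3) ltac:(lra) ltac:(lra) ltac:(lra)) _.
  apply: ereal_sup_ubound; exists (torus_e @` `[1/4, 1/3]) => //.
  by split; [exact: arc_sub_sumdiffT | exact: compact_arc].
by rewrite -sup_eq in inner_ge; move: (le_trans inner_ge sup_le0); rewrite lee_fin; lra.
Qed.
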